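(* For every integer $n>2$ and every automorphism $\varphi\in\mathrm{Aut}(F)$, $(\varphi(r_1),\varphi(r_2))\sim_{AC}(r_1,r_2)$, where $(r_1,r_2)=\mathrm{AK}(n)=(xyxy^{-1}x^{-1}y^{-1},\ x^ny^{-(n+1)})$.
   Context: $F=F(x,y)$ is the free group on $\{x,y\}$. The Akbulut–Kurby pair is $\mathrm{AK}(n)=(xyxy^{-1}x^{-1}y^{-1},\ x^{n}y^{-(n+1)})$, i.e. the presentation $\langle x,y\mid xyx=yxy,\ x^n=y^{n+1}\rangle$ of the trivial group. The Andrews–Curtis (AC) moves on a pair $(r_1,r_2)\in F^2$ are: replace $r_i$ by $r_ir_j$ ($i\ne j$); replace $r_i$ by $r_i^{-1}$; replace $r_i$ by $w^{-1}r_iw$ for some $w\in F$. Two pairs are AC-equivalent, $\sim_{AC}$, if one can be obtained from the other by a finite sequence of AC-moves. *)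

(* The free group F = F(x,y) on two generators, modelled
   concretely as the set of freely reduced words over {x, x^-1, y, y^-1}. *)
From mathcomp Require Import all_boot.
From Stdlib Require Import Relations.
Set Implicit Arguments. Unset Strict Implicit. Unset Printing Implicit Defensive.

(* A letter (g, s): g = false is x, g = true is y; s = false is exponent +1,
   s = true is exponent -1. *)
Definition letter := (bool * bool)%type.
Definition word := seq letter.
Definition inv_letter (a : letter) : letter := (a.1, ~~ a.2).

Fixpoint reducedb (w : word) : bool :=
  match w with
  | a :: ((b :: _) as t) => (b != inv_letter a) && reducedb t
  | _ => true
  end.

Definition push (a : letter) (s : word) : word :=
  match s with
  | b :: t => if b == inv_letter a then t else a :: s
  | [::] => [:: a]
  end.

Definition reduce (w : word) : word := foldr push [::] w.

Lemma reducedb_tail a t : reducedb (a :: t) -> reducedb t.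
Proof. by case: t => [|b t] //= /andP[]. Qed.

Lemma push_reduced a s : reducedb s -> reducedb (push a s).
Proof.
case: s => [|b t] //= H.
case: ifP => [_|Hb]; first exact: reducedb_tail H.
by rewrite /= Hb H.
Qed.

Lemma reduce_reduced w : reducedb (reduce w).
Proof. by elim: w => [|a w IH] //=; apply: push_reduced. Qed.

Definition FG := {w : word | reducedb w}.

Definition FG1 : FG := exist _ [::] isT.
Definition FGmul (u v : FG) : FG :=
  exist _ (reduce (proj1_sig u ++ proj1_sig v)) (reduce_reduced _).
Definition FGinv (u : FG) : FG :=
  exist _ (reduce (rev (map inv_letter (proj1_sig u)))) (reduce_reduced _).
Definition FGpow (u : FG) (n : nat) : FG := iter n (FGmul u) FG1.

Definition gx : FG := exist _ [:: (false, false)] isT.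
Definition gy : FG := exist _ [:: (true, false)] isT.

Definition is_aut (phi : FG -> FG) : Prop :=
  (forall u v, phi (FGmul u v) = FGmul (phi u) (phi v)) /\ bijective phi.

Definition AK1 : FG :=
  FGmul gx (FGmul gy (FGmul gx (FGmul (FGinv gy) (FGmul (FGinv gx) (FGinv gy))))).
Definition AK2 (n : nat) : FG := FGmul (FGpow gx n) (FGinv (FGpow gy n.+1)).

Inductive ACmove : FG * FG -> FG * FG -> Prop :=
| AC_mul12 r1 r2 : ACmove (r1, r2) (FGmul r1 r2, r2)
| AC_mul21 r1 r2 : ACmove (r1, r2) (r1, FGmul r2 r1)
| AC_inv1 r1 r2 : ACmove (r1, r2) (FGinv r1, r2)
| AC_inv2 r1 r2 : ACmove (r1, r2) (r1, FGinv r2)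
| AC_conj1 r1 r2 w : ACmove (r1, r2) (FGmul (FGinv w) (FGmul r1 w), r2)
| AC_conj2 r1 r2 w : ACmove (r1, r2) (r1, FGmul (FGinv w) (FGmul r2 w)).

Definition AC_equiv : FG * FG -> FG * FG -> Prop := clos_refl_trans _ ACmove.

(* Write phi_(A,B) for the endomorphism x |-> A, y |-> B of F. The pairs (A, B) for which
   phi_(A,B) maps AK(n) to an AC-equivalent pair are closed under composition, under
   inverses and under conjugation, and explicit AC-sequences show that the swap (y, x) and
   the transvection (x, xy) belong to them. Nielsen reduction shows that such a class
   contains every generating pair: if no elementary transvection followed by a conjugation
   shortens a generating pair (A, B), the images of consecutive letters cancel at most half
   of each other and no image loses half from both sides, so the image of a reduced word is
   at least as long as the image of its last letter; as x and y are such images, A and B are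
   single letters x^+-1, y^+-1. *)

From HB Require Import structures.
From mathcomp Require Import all_boot zify.
From Stdlib Require Import Relations Classical.
Set Implicit Arguments. Unset Strict Implicit. Unset Printing Implicit Defensive.

(** * Reduced words *)

Arguments inv_letter : simpl never.

Lemma inv_letterK : involutive inv_letter.
Proof. by case=> g s; rewrite /inv_letter /= negbK. Qed.

Lemma inv_letter_neq a : inv_letter a != a.
Proof. by case: a => g []; rewrite /inv_letter /= xpair_eqE eqxx. Qed.

Lemma inv_letter_inj : injective inv_letter.
Proof. exact: inv_inj inv_letterK. Qed.

Definition winv (w : word) : word := rev (map inv_letter w).

Lemma winvK : involutive winv.
Proof. by move=> w; rewrite /winv map_rev revK -map_comp (eq_map inv_letterK) map_id. Qed.

Lemma winv_cat u v : winv (u ++ v) = winv v ++ winv u.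
Proof. by rewrite /winv map_cat rev_cat. Qed.

Lemma size_winv w : size (winv w) = size w.
Proof. by rewrite size_rev size_map. Qed.

Lemma push_cons a s : reducedb (a :: s) -> push a s = a :: s.
Proof. by case: s => [|b t] //= /andP[/negbTE ->]. Qed.

Lemma reduce_id w : reducedb w -> reduce w = w.
Proof.
elim: w => [|a w IHw] //= wr.
by rewrite IHw ?(reducedb_tail wr) // push_cons.
Qed.

Lemma pushK a r : reducedb r -> push a (push (inv_letter a) r) = r.
Proof.
case: r => [|b r] /=; first by rewrite eqxx.
case: ifP => [/eqP|_ _]; last by rewrite /= eqxx.
rewrite inv_letterK => -> {b}.
by case: r => [|c r] //= /andP[/negbTE ->].
Qed.

Lemma reduce_cat u v : reduce (u ++ v) = foldr push (reduce v) u.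
Proof. by rewrite /reduce foldr_cat. Qed.

Lemma foldr_push_reduced t s : reducedb t -> reducedb (foldr push t s).
Proof. by move=> tr; elim: s => [|a s IHs] //=; apply: push_reduced. Qed.

Lemma foldr_push_reduce t u : reducedb t -> foldr push t (reduce u) = foldr push t u.
Proof.
move=> tr; elim: u => [|a u IHu] //=; rewrite -IHu.
case: (reduce u) => [|b s] //=; case: ifP => [/eqP ->|] //=.
by rewrite pushK // foldr_push_reduced.
Qed.

Lemma reduce_catl u v : reduce (reduce u ++ v) = reduce (u ++ v).
Proof. by rewrite !reduce_cat foldr_push_reduce // reduce_reduced. Qed.

Lemma reduce_catr u v : reduce (u ++ reduce v) = reduce (u ++ v).
Proof. by rewrite !reduce_cat reduce_id // reduce_reduced. Qed.

Lemma reduce_winv_cat u : reduce (winv u ++ u) = [::].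
Proof.
elim: u => [|a u IHu] //=.
rewrite /winv /= rev_cons -cats1 -catA -reduce_catr /= -{2}(inv_letterK a).
by rewrite pushK ?reduce_reduced // reduce_catr.
Qed.

Lemma reducedb_catl u v : reducedb (u ++ v) -> reducedb u.
Proof.
elim: u => [|a [|b u] IHu] //= /andP[-> r]; exact: IHu.
Qed.

Lemma reducedb_catr u v : reducedb (u ++ v) -> reducedb v.
Proof. by elim: u => [|a u IHu] // /reducedb_tail. Qed.

Lemma reducedb_rcons u a : reducedb (rcons u a) = 
  reducedb u && (if u is b :: u' then a != inv_letter (last b u') else true).
Proof.
elim: u => [|b u IHu] //=.
by case: u IHu => [|c u] /= IHu; rewrite ?andbT // IHu andbA.
Qed.

Lemma reducedb_winv w : reducedb w -> reducedb (winv w).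
Proof.
elim: w => [|a [|b w] IHw] //= /andP[ba wr].
rewrite /winv rev_cons reducedb_rcons IHw //.
rewrite /= rev_cons; case: (rev _) => [|c s] /=; rewrite ?last_rcons (inj_eq inv_letter_inj);
  by apply: contra ba => /eqP ->; rewrite inv_letterK.
Qed.

Lemma letter_eq_same_gen l l' : l.1 = l'.1 -> l' != inv_letter l -> l' = l.
Proof.
by case: l l' => g s [g' s'] /= <-; rewrite /inv_letter /= xpair_eqE eqxx; case: s; case: s'.
Qed.

Lemma letter_inv_same_gen l l' : l.1 = l'.1 -> l' != l -> l' = inv_letter l.
Proof.
by case: l l' => g s [g' s'] /= <-; rewrite /inv_letter /= xpair_eqE eqxx; case: s; case: s'.
Qed.

Lemma reducedb_take k w : reducedb w -> reducedb (take k w).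
Proof. by rewrite -{1}(cat_take_drop k w) => /reducedb_catl. Qed.

Lemma reducedb_drop k w : reducedb w -> reducedb (drop k w).
Proof. by rewrite -{1}(cat_take_drop k w) => /reducedb_catr. Qed.

Lemma reducedb_cat_rcons u a v :
  reducedb (rcons u a) -> reducedb (a :: v) -> reducedb (u ++ a :: v).
Proof.
elim: u => [|b u IHu] //= ur av; have := IHu (reducedb_tail ur) av.
by case: u ur {IHu} => [|c u] /= /andP[-> _] ->.
Qed.

Lemma not_reducedb_cat_winv u : u != [::] -> ~~ reducedb (u ++ winv u).
Proof.
case/lastP: u => [|u a] // _; rewrite -cats1 winv_cat -catA.
by apply/negP => /reducedb_catr /=; rewrite eqxx.
Qed.

Definition letter0 : letter := (false, false).

Lemma nth_winv w i : i < size w ->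
  nth letter0 (winv w) i = inv_letter (nth letter0 w (size w - i.+1)).
Proof.
move=> lti; rewrite /winv nth_rev size_map // (nth_map letter0) //; lia.
Qed.

(* [cancel_len (rev u) v] is the number of letters of [v] cancelled by [u] in [reduce (u ++ v)]. *)
Fixpoint cancel_len (rl v : word) : nat :=
  match rl, v with
  | a :: rl', b :: v' => if b == inv_letter a then (cancel_len rl' v').+1 else 0
  | _, _ => 0
  end.

Lemma cancel_len_le rl v : cancel_len rl v <= size rl /\ cancel_len rl v <= size v.
Proof.
elim: rl v => [|a rl IHrl] [|b v] //=.
by case: ifP => _ //; have [? ?] := IHrl v.
Qed.

Lemma nth_cancel_len rl v i : i < cancel_len rl v ->
  nth letter0 v i = inv_letter (nth letter0 rl i).
Proof.
elim: rl v i => [|a rl IHrl] [|b v] i //=.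
by case: ifP => [/eqP ->|] //; case: i => [|i] //=; apply: IHrl.
Qed.

Lemma nth_cancel_len_neq rl v : cancel_len rl v < size rl -> cancel_len rl v < size v ->
  nth letter0 v (cancel_len rl v) != inv_letter (nth letter0 rl (cancel_len rl v)).
Proof.
elim: rl v => [|a rl IHrl] [|b v] //=.
by case: ifP => [_|/negbT] //=; apply: IHrl.
Qed.

Lemma cancel_lenE rl v c : c <= size rl -> c <= size v ->
  (forall i, i < c -> nth letter0 v i = inv_letter (nth letter0 rl i)) ->
  (c < size rl -> c < size v -> nth letter0 v c != inv_letter (nth letter0 rl c)) ->
  cancel_len rl v = c.
Proof.
elim: rl v c => [|a rl IHrl] [|b v] [|c] //=.
- by move=> _ _ _ /(_ isT isT); case: ifP => // /eqP ->; rewrite eqxx.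
- move=> ? ? eq_lt neq_c; have /= -> := eq_lt 0 isT; rewrite eqxx.
  by congr S; apply: IHrl => // i; apply: (eq_lt i.+1).
Qed.

Lemma cancel_len_take_cat rl v k z : cancel_len rl v < size rl ->
  cancel_len rl v < k -> k <= size v -> cancel_len rl (take k v ++ z) = cancel_len rl v.
Proof.
move=> lt_rl lt_k le_kv; have [le_rl le_v] := cancel_len_le rl v.
have lt_v : cancel_len rl v < size v by apply: leq_trans le_kv.
apply: cancel_lenE => //.
- by rewrite size_cat size_take; case: ifP; lia.
- move=> i lti; rewrite nth_cat size_take.
  have -> : i < (if k < size v then k else size v) by case: ifP; lia.
  by rewrite nth_take ?(nth_cancel_len lti) //; lia.
- move=> _ _; rewrite nth_cat size_take.
  have -> : cancel_len rl v < (if k < size v then k else size v) by case: ifP; lia.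
  by rewrite nth_take //; apply: nth_cancel_len_neq.
Qed.

Lemma reducedb_nth w i : reducedb w -> i.+1 < size w ->
  nth letter0 w i.+1 != inv_letter (nth letter0 w i).
Proof.
elim: w i => [|a w IHw] [|i] //= wr; last by apply: IHw; apply: reducedb_tail wr.
by case: w wr {IHw} => [|b w] //= /andP[].
Qed.

Lemma cancel_len_self w : reducedb w -> 0 < size w -> 2 * cancel_len (rev w) w < size w.
Proof.
move=> wr w_gt0; set c := cancel_len (rev w) w.
have [le_c _] := cancel_len_le (rev w) w; rewrite size_rev -/c in le_c.
have mirror i : i < c -> nth letter0 w i = inv_letter (nth letter0 w (size w - i.+1)).
  by move=> lti; rewrite (nth_cancel_len lti) nth_rev //; lia.
rewrite ltnNge; apply/negP => le_wc.
have := odd_double_half (size w); rewrite -addnn; set m := (size w)./2.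
case: (odd (size w)) => /= sz_w.
- have /eqP := mirror m ltac:(lia); rewrite (_ : size w - m.+1 = m); last by lia.
  by rewrite eq_sym (negbTE (inv_letter_neq _)).
- have := mirror m.-1 ltac:(lia); rewrite (_ : size w - m.-1.+1 = m); last by lia.
  move=> eq_m; have := reducedb_nth (i := m.-1) wr.
  by rewrite prednK ?eq_m ?inv_letterK ?eqxx //; lia.
Qed.

Lemma reduce_cat_cancel u v : reducedb u -> reducedb v ->
  reduce (u ++ v) = take (size u - cancel_len (rev u) v) u ++ drop (cancel_len (rev u) v) v.
Proof.
elim/last_ind: u v => [|u a IHu] v ur vr; first by rewrite /= drop0 reduce_id.
have {}ur' : reducedb u by move: ur; rewrite -cats1 => /reducedb_catl.
rewrite rev_rcons cat_rcons reduce_cat /= reduce_id //.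
case: v vr => [|b v] vr /=.
  by rewrite -[[:: a]]/(reduce [:: a]) -reduce_cat cats1 reduce_id // subn0 take_size cats0.
case: ifP => [/eqP _|ba].
  rewrite -{1}(reduce_id (reducedb_tail vr)) -reduce_cat IHu ?(reducedb_tail vr) //.
  by rewrite size_rcons subSS -cats1 takel_cat ?leq_subr.
have abv : reducedb [:: a, b & v] by rewrite /= ba.
rewrite subn0 take_size drop0 -{1}(reduce_id abv) -reduce_cat cat_rcons reduce_id //.
exact: reducedb_cat_rcons.
Qed.

Lemma size_reduce_cat u v : reducedb u -> reducedb v ->
  size (reduce (u ++ v)) = size u + size v - 2 * cancel_len (rev u) v.
Proof.
move=> ur vr; rewrite reduce_cat_cancel // size_cat size_take size_drop.
by have [] := cancel_len_le (rev u) v; rewrite size_rev; case: ifP; lia.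
Qed.

Lemma all_reduce (P : pred letter) w : all P w -> all P (reduce w).
Proof.
elim: w => [|a w IHw] //= /andP[Pa /IHw]; case: (reduce w) => [|b s] /=; first by rewrite Pa.
by case: ifP => _ /andP[Pb Ps] //=; rewrite Pa Pb Ps.
Qed.

Lemma suffix_cancel_len (p b : word) m : cancel_len (rev b) p = m ->
  m <= size b -> m <= size p -> drop (size b - m) b = winv (take m p).
Proof.
move=> cbp le_mb le_mp; apply: (@eq_from_nth _ letter0).
  by rewrite size_drop size_winv size_take; case: ifP; lia.
move=> i; rewrite size_drop => lti.
have sz_take : size (take m p) = m by rewrite size_take; case: ifP; lia.
rewrite nth_winv sz_take; last by lia.
rewrite nth_take; last by lia.
have lt_c : m - i.+1 < cancel_len (rev b) p by lia.
rewrite (nth_cancel_len lt_c) nth_rev; last by lia.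
by rewrite inv_letterK nth_drop; congr nth; lia.
Qed.

Lemma prefix_cancel_len (p b : word) m : cancel_len (rev p) b = m ->
  size p = 2 * m -> m <= size b -> take m b = winv (drop m p).
Proof.
move=> cpb sz_p le_mb; apply: (@eq_from_nth _ letter0).
  by rewrite size_winv size_take size_drop; case: ifP; lia.
move=> i; rewrite size_take => lti.
have {}lti : i < m by move: lti; case: ifP; lia.
have sz_drop : size (drop m p) = m by rewrite size_drop; lia.
rewrite nth_winv sz_drop // nth_take // nth_drop.
have lt_c : i < cancel_len (rev p) b by rewrite cpb.
by rewrite (nth_cancel_len lt_c) nth_rev; [congr inv_letter; congr nth | ]; lia.
Qed.

Lemma take_winv m w : take m (winv w) = winv (drop (size w - m) w).
Proof. by rewrite /winv take_rev size_map map_drop. Qed.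

Lemma tie_split (p b : word) m :
  cancel_len (rev b) p = m -> cancel_len (rev p) b = m -> size p = 2 * m -> 2 * m <= size b ->
  b = winv (drop m p) ++ take (size b - 2 * m) (drop m b) ++ winv (take m p).
Proof.
move=> cbp cpb sz_p le_b.
rewrite -(prefix_cancel_len cpb sz_p) -?(suffix_cancel_len cbp); try lia.
rewrite (_ : size b - m = size b - 2 * m + m); last by lia.
by rewrite -drop_drop !cat_take_drop.
Qed.

(** * The free group *)

Definition mkFG (w : word) : FG := exist _ (reduce w) (reduce_reduced w).

Lemma val_mkFG w : reducedb w -> sval (mkFG w) = w.
Proof. exact: reduce_id. Qed.

Lemma mkFG_val (u : FG) : mkFG (sval u) = u.
Proof. by case: u => w wr; apply: val_inj; rewrite /= reduce_id. Qed.

Lemma FGmulA : associative FGmul.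
Proof. by move=> u v w; apply: val_inj; rewrite /= reduce_catl reduce_catr catA. Qed.

Lemma FGmul1g : left_id FG1 FGmul.
Proof. by case=> w wr; apply: val_inj; rewrite /= reduce_id. Qed.

Lemma FGmulg1 : right_id FG1 FGmul.
Proof. by case=> w wr; apply: val_inj; rewrite /= cats0 reduce_id. Qed.

Lemma FGmulVg : left_inverse FG1 FGinv FGmul.
Proof. by move=> u; apply: val_inj; rewrite /= reduce_catl reduce_winv_cat. Qed.

Lemma FGmulgV : right_inverse FG1 FGinv FGmul.
Proof.
by move=> u; apply: val_inj; rewrite /= reduce_catr -{1}[sval u]winvK reduce_winv_cat.
Qed.

HB.instance Definition _ := Choice.on FG.
HB.instance Definition _ := isGroup.Build FG FGmulA FGmul1g FGmulg1 FGmulVg FGmulgV.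

Local Open Scope group_scope.

Lemma mkFG_cat u v : mkFG (u ++ v) = mkFG u * mkFG v.
Proof. by apply: val_inj; rewrite /= reduce_catl reduce_catr. Qed.

Lemma mkFG_winv w : mkFG (winv w) = (mkFG w)^-1.
Proof.
symmetry; apply: mulg1_eq; rewrite -mkFG_cat; apply: val_inj.
by rewrite /= -{1}[w]winvK reduce_winv_cat.
Qed.

Lemma val_invg (u : FG) : sval u^-1 = winv (sval u).
Proof. by rewrite /= reduce_id //; apply: reducedb_winv; case: u. Qed.

Lemma FGpowE (u : FG) n : FGpow u n = u ^+ n.
Proof. exact: iter_mulg_1. Qed.

Ltac fg_compute := apply: val_inj; vm_compute; reflexivity.

Lemma gxy_neq_gyx : gx * gy != gy * gx.
Proof. by apply/eqP => /(congr1 sval). Qed.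

(** * Endomorphisms of F *)

Definition img (A B : FG) (l : letter) : FG :=
  let g := if l.1 then B else A in if l.2 then g^-1 else g.

Definition homxy (A B u : FG) : FG := \prod_(l <- sval u) img A B l.

Lemma img_inv_letter A B l : img A B (inv_letter l) = (img A B l)^-1.
Proof. by case: l => g []; rewrite /img /inv_letter /= ?invgK. Qed.

Lemma prod_img_reduce A B w : \prod_(l <- reduce w) img A B l = \prod_(l <- w) img A B l.
Proof.
elim: w => [|a w IHw] //=; rewrite big_cons -IHw.
case: (reduce w) => [|b s] /=; first by rewrite big_seq1 big_nil mulg1.
case: ifP => [/eqP ->|_]; rewrite ?big_cons //.
by rewrite img_inv_letter mulVKg.
Qed.

Lemma homxy_mkFG A B w : homxy A B (mkFG w) = \prod_(l <- w) img A B l.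
Proof. exact: prod_img_reduce. Qed.

Lemma homxyM A B : {morph homxy A B : u v / u * v}.
Proof. by move=> u v; rewrite [u * v]/(mkFG _) homxy_mkFG big_cat. Qed.

Lemma homxy_gx A B : homxy A B gx = A.
Proof. exact: big_seq1. Qed.

Lemma homxy_gy A B : homxy A B gy = B.
Proof. exact: big_seq1. Qed.

Lemma img_gxgy l : img gx gy l = mkFG [:: l].
Proof. by case: l => [[] []]; apply: val_inj. Qed.

Lemma homxy_id u : homxy gx gy u = u.
Proof.
rewrite -[u in RHS]mkFG_val /homxy; elim: (sval u) => [|l w IHw].
  by rewrite big_nil; apply: val_inj.
by rewrite big_cons IHw -[l :: w]/([:: l] ++ w) mkFG_cat img_gxgy.
Qed.

Section Morphism.
Variable f : FG -> FG.
Hypothesis fM : {morph f : u v / u * v}.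

Lemma morph1 : f 1 = 1.
Proof. by apply: (mulgI (f 1)); rewrite -fM !mulg1. Qed.

Lemma morphV u : f u^-1 = (f u)^-1.
Proof. by symmetry; apply: mulg1_eq; rewrite -fM mulgV morph1. Qed.

Lemma morphX u n : f (u ^+ n) = f u ^+ n.
Proof. by elim: n => [|n IHn]; rewrite ?morph1 // !expgS fM IHn. Qed.

Lemma morphJ u w : f (u ^ w) = f u ^ f w.
Proof. by rewrite !fM morphV. Qed.

Lemma morph_homxy A B u : f (homxy A B u) = homxy (f A) (f B) u.
Proof.
rewrite /homxy (big_morph f fM morph1); apply: eq_bigr => -[g s] _.
by case: g; case: s; rewrite /img /= ?morphV.
Qed.

Lemma morphE u : f u = homxy (f gx) (f gy) u.
Proof. by rewrite -morph_homxy homxy_id. Qed.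

End Morphism.

Lemma homxy_comp A B C D u :
  homxy A B (homxy C D u) = homxy (homxy A B C) (homxy A B D) u.
Proof. exact/morph_homxy/homxyM. Qed.

Lemma homxy_conj A B w u : homxy (A ^ w) (B ^ w) u = homxy A B u ^ w.
Proof. by rewrite -(morph_homxy (f := conjg^~ w)) // => x y; rewrite conjMg. Qed.

(** * Nielsen reduction *)

Definition len (u : FG) : nat := size (sval u).

Lemma lenV u : len u^-1 = len u.
Proof. by rewrite /len val_invg size_winv. Qed.

Lemma len_mkFG w : reducedb w -> len (mkFG w) = size w.
Proof. by move=> wr; rewrite /len val_mkFG. Qed.

Lemma lenM (u v : FG) : len (u * v) = len u + len v - (2 * cancel_len (rev (sval u)) (sval v))%N.
Proof. by rewrite /len /= size_reduce_cat //; [case: u | case: v]. Qed.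

Lemma lenM_le (u v : FG) : len (u * v) <= len u + len v.
Proof. by rewrite lenM leq_subr. Qed.

Lemma len_eq0 u : len u = 0%N -> u = 1.
Proof. by case: u => -[] // wr _; apply: val_inj. Qed.

Definition generates (A B : FG) : Prop :=
  exists g h, homxy A B g = gx /\ homxy A B h = gy.

Lemma generates_onto A B : generates A B -> forall u, exists g, homxy A B g = u.
Proof.
by case=> g [h [gA hB]] u; exists (homxy g h u); rewrite homxy_comp gA hB homxy_id.
Qed.

Lemma generates_homxy A B C D g h : generates C D ->
  homxy A B g = C -> homxy A B h = D -> generates A B.
Proof.
move=> /generates_onto CDonto gC hD; have [e eX] := CDonto gx; have [f fY] := CDonto gy.
by exists (homxy g h e), (homxy g h f); rewrite !homxy_comp gC hD.
Qed.

Lemma generates_swap A B : generates A B -> generates B A.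
Proof.
by move=> genAB; apply: (generates_homxy genAB (g := gy) (h := gx)); rewrite ?homxy_gx ?homxy_gy.
Qed.

Lemma generates_transvect A B : generates A B -> generates A (A * B).
Proof.
move=> genAB; apply: (generates_homxy genAB (g := gx) (h := gx^-1 * gy)).
  exact: homxy_gx.
by rewrite homxyM (morphV (@homxyM _ _)) homxy_gx homxy_gy mulKg.
Qed.

Lemma generates_transvectV A B : generates A B -> generates A (A^-1 * B).
Proof.
move=> genAB; apply: (generates_homxy genAB (g := gx) (h := gx * gy)).
  exact: homxy_gx.
by rewrite homxyM homxy_gx homxy_gy mulVKg.
Qed.

Lemma generates_conj A B w : generates A B -> generates (A ^ w) (B ^ w).
Proof.
move=> genAB; have [e ew] := generates_onto genAB w.
have conj_e : homxy (A ^ w) (B ^ w) e = w by rewrite homxy_conj ew conjgE mulKg.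
apply: (generates_homxy genAB (g := gx ^ e^-1) (h := gy ^ e^-1));
  by rewrite (morphJ (@homxyM _ _)) (morphV (@homxyM _ _)) conj_e ?homxy_gx ?homxy_gy conjgK.
Qed.

Definition transvections (A B : FG) : seq FG := [:: A * B; A^-1 * B; B * A; B / A].

Definition nielsen_move (A B A' B' : FG) : bool :=
  (A' == A) && (B' \in transvections A B) || (B' == B) && (A' \in transvections B A).

Lemma transvections_sym A B B' : B' \in transvections A B -> B \in transvections A B'.
Proof. by rewrite !inE => /or4P[] /eqP ->; rewrite ?mulKg ?mulVKg ?mulgK ?mulgVK eqxx ?orbT. Qed.

Lemma nielsen_move_sym A B A' B' : nielsen_move A B A' B' -> nielsen_move A' B' A B.
Proof.
by case/orP => /andP[/eqP-> /transvections_sym mem]; rewrite /nielsen_move eqxx mem ?orbT.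
Qed.

Definition reducible (A B : FG) : Prop := exists A' B' w,
  nielsen_move A B A' B' /\ len (A' ^ w) + len (B' ^ w) < len A + len B.

Lemma reducible_swap A B : reducible A B -> reducible B A.
Proof.
case=> A' [B' [w [mv lt]]]; exists B', A', w; split; last by rewrite addnC [len B + _]addnC.
by rewrite /nielsen_move orbC.
Qed.

Section NielsenInvariant.
Variable P : FG -> FG -> Prop.
Hypothesis P_swap : forall A B, P A B -> P B A.
Hypothesis P_transvect : forall A B, P A B -> P A (A * B).
Hypothesis P_transvectV : forall A B, P A B -> P A (A^-1 * B).
Hypothesis P_conj : forall A B w, P A B -> P (A ^ w) (B ^ w).

Let P_eq A B A' B' : P A B -> A = A' -> B = B' -> P A' B'.
Proof. by move=> ? <- <-. Qed.

Lemma P_transvections A B B' : B' \in transvections A B -> P A B -> P A B'.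
Proof.
rewrite !inE => /or4P[] /eqP -> PAB; [exact: P_transvect | exact: P_transvectV | |].
- by apply: (P_eq (P_conj A (P_transvect PAB))); rewrite conjgE ?gnorm.
- by apply: (P_eq (P_conj A^-1 (P_transvectV PAB))); rewrite conjgE ?gnorm.
Qed.

Lemma P_nielsen_move A B A' B' : nielsen_move A B A' B' -> P A B -> P A' B'.
Proof.
case/orP=> /andP[/eqP-> mem] PAB; first exact: P_transvections mem PAB.
exact/P_swap/(P_transvections mem)/P_swap.
Qed.

Lemma P_invl A B : P A B -> P A^-1 B.
Proof.
move=> /P_swap/P_transvect/P_swap/P_transvectV/P_swap/P_transvect/(P_conj A^-1)/P_eq.
by apply; rewrite !conjgE ?gnorm.
Qed.

Lemma P_letters a b : P gx gy -> a.1 != b.1 -> P (img gx gy a) (img gx gy b).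
Proof.
have P_sign A B (sa sb : bool) : P A B -> P (if sa then A^-1 else A) (if sb then B^-1 else B).
  case: sa; case: sb => // PAB; last exact/P_swap/P_invl/P_swap.
    exact/P_invl/P_swap/P_invl/P_swap.
  exact/P_invl.
by move=> Pxy; case: a b => [[] sa] [[] sb] //= _; apply: P_sign => //; apply: P_swap.
Qed.

End NielsenInvariant.

Section ImageProducts.
Local Close Scope group_scope.
Variables A B : FG.

Let imgw l := sval (img A B l).
Let Pw ls := sval (\prod_(l <- ls) img A B l)%g.
Local Notation cancel l l' := (cancel_len (rev (imgw l)) (imgw l')).

Let imgw_reduced l : reducedb (imgw l). Proof. by rewrite /imgw; case: img. Qed.
Let Pw_reduced ls : reducedb (Pw ls). Proof. by rewrite /Pw; case: (\prod_(l <- ls) _)%g. Qed.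

Let Pw_cons l ls : Pw (l :: ls) = reduce (imgw l ++ Pw ls).
Proof. by rewrite /Pw big_cons. Qed.

Let Pw1 l : Pw [:: l] = imgw l.
Proof. by rewrite Pw_cons /Pw big_nil cats0 reduce_id. Qed.

Lemma all_prod_img (P : pred letter) g0 :
  (forall l, P l -> all (fun c : letter => c.1 == g0) (imgw l)) ->
  forall ls, all P ls -> all (fun c : letter => c.1 == g0) (Pw ls).
Proof.
move=> Pimg; elim=> [|l ls IHls] /=; first by rewrite /Pw big_nil.
case/andP=> Pl Pls.
by rewrite Pw_cons all_reduce // all_cat Pimg // IHls.
Qed.

(* Nielsen's conditions: images of letters of distinct generators cancel at most half of
   each other, and no image is cancelled exactly half from both sides. *)
Hypothesis img_neq_nil : forall l, 0 < size (imgw l).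
Hypothesis cancel_cross : forall l l', l.1 != l'.1 ->
  2 * cancel l l' <= size (imgw l) /\ 2 * cancel l l' <= size (imgw l').
Hypothesis no_tie : forall l0 l l', l != inv_letter l0 -> l' != inv_letter l ->
  2 * cancel l0 l = size (imgw l) -> 2 * cancel l l' = size (imgw l) -> False.

Lemma cancel_le_half l l' : l' != inv_letter l ->
  2 * cancel l l' <= size (imgw l) /\ 2 * cancel l l' <= size (imgw l').
Proof.
move=> l'_neq; case: (boolP (l.1 == l'.1)) => [/eqP eq_g|]; last exact: cancel_cross.
rewrite (letter_eq_same_gen eq_g l'_neq).
by have := cancel_len_self (imgw_reduced l) (img_neq_nil l); lia.
Qed.

Definition keeps_head l ls := exists z d,
  Pw (l :: ls) = take (size (imgw l) - d) (imgw l) ++ z /\ 2 * d <= size (imgw l) /\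
  (if ls is l' :: _ then d = cancel l l' else d = 0).

Lemma keeps_head_cons l0 l ls : reducedb [:: l0, l & ls] -> keeps_head l ls ->
  keeps_head l0 (l :: ls) /\
  size (Pw [:: l0, l & ls]) = size (imgw l0) + size (Pw (l :: ls)) - 2 * cancel l0 l.
Proof.
move=> /= /andP[l_neq red_ls] [z [d [Pw_l [le_d d_def]]]].
have [le_c0 le_c] := cancel_le_half l_neq.
have lt_cd : cancel l0 l + d < size (imgw l).
  case: ls red_ls d_def {Pw_l} => [|l' ls] /= red_ls ->; first by have := img_neq_nil l; lia.
  have l'_neq : l' != inv_letter l by case/andP: red_ls.
  have [le_c' _] := cancel_le_half l'_neq.
  have : ~ (2 * cancel l0 l = size (imgw l) /\ 2 * cancel l l' = size (imgw l)).
    by case; apply: no_tie l_neq l'_neq.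
  lia.
have cancel_Pw : cancel_len (rev (imgw l0)) (Pw (l :: ls)) = cancel l0 l.
  by rewrite Pw_l; apply: cancel_len_take_cat; rewrite ?size_rev; have := img_neq_nil l0; lia.
split; last by rewrite Pw_cons size_reduce_cat // cancel_Pw.
exists (drop (cancel l0 l) (Pw (l :: ls))), (cancel l0 l).
by rewrite Pw_cons reduce_cat_cancel // cancel_Pw.
Qed.

Lemma keeps_head_reduced l ls : reducedb (l :: ls) ->
  keeps_head l ls /\ size (imgw (last l ls)) <= size (Pw (l :: ls)).
Proof.
elim: ls l => [|l1 ls IHls] l red_ls.
  by split; [exists [::], 0; rewrite Pw1 subn0 take_size cats0 | rewrite Pw1].
have [kh le_last] := IHls l1 (reducedb_tail red_ls).
have [kh' ->] := keeps_head_cons red_ls kh; split => //.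
have [le_c _] := cancel_le_half (andP red_ls).1.
by rewrite /=; lia.
Qed.

Lemma size_prod_img_gt1 : (forall l, 1 < size (imgw l)) ->
  forall ls, reducedb ls -> ls != [::] -> 1 < size (Pw ls).
Proof.
move=> img_gt1 [|l ls] // red_ls _; have [_ le_last] := keeps_head_reduced red_ls.
exact: leq_trans (img_gt1 _) le_last.
Qed.

Lemma size_prod_img_ge g n : 1 < n ->
  (forall l, l.1 = g -> size (imgw l) = 1) -> (forall l, l.1 != g -> size (imgw l) = n) ->
  forall ls, reducedb ls -> has (fun l : letter => l.1 != g) ls -> n <= size (Pw ls).
Proof.
move=> n_gt1 img_g img_ng; elim=> [|l [|l1 ls] IHls] // red_ls has_ng.
  by rewrite Pw1 img_ng //; move: has_ng => /= /orP[].
have [kh _] := keeps_head_reduced (reducedb_tail red_ls).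
have [_ ->] := keeps_head_cons red_ls kh.
have [le_c le_c'] : 2 * cancel l l1 <= size (imgw l) /\ 2 * cancel l l1 <= size (imgw l1).
  by apply: cancel_le_half; case/andP: red_ls.
have IH := IHls (reducedb_tail red_ls).
case: (boolP (l.1 != g)) => [ng_l | /negPn/eqP g_l]; last first.
  by rewrite img_g // in le_c *; move: has_ng => /=; rewrite g_l eqxx => /IH; lia.
rewrite img_ng //; case: (boolP (l1.1 != g)) => [ng_l1 | /negPn/eqP g_l1].
  by rewrite img_ng // in le_c'; have := IH; rewrite /= ng_l1 => /(_ isT); lia.
by rewrite img_g // in le_c'; lia.
Qed.

End ImageProducts.

Lemma img_swap A B l : img B A l = img A B (~~ l.1, l.2).
Proof. by case: l => [[] s]. Qed.

Lemma len_img A B l : len (img A B l) = len (if l.1 then B else A).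
Proof. by case: l => g []; rewrite /img ?lenV. Qed.

Lemma len_img_conj A B l w : len (img A B l ^ w) = len ((if l.1 then B else A) ^ w).
Proof. by case: l => g []; rewrite /img ?conjVg ?lenV. Qed.

(* Replacing A^s0 = V^-1 R U^-1 by A^s0 B^s = V^-1 R V and conjugating by V^-1 shortens
   the pair to (R^+-1, (V U)^+-1). *)
Lemma reducible_of_tie A B s0 s U V R :
  img A B (true, s) = U * V -> img A B (false, s0) = V^-1 * R * U^-1 ->
  len B = (len U + len V)%N -> len A = (len U + len R + len V)%N -> 0 < len V ->
  reducible A B.
Proof.
move=> eq_p eq_b lenB lenA V_gt0; set a := img A B (false, s0) * img A B (true, s).
have conj_a : a ^ V^-1 = R by rewrite /a eq_b eq_p conjgE invgK ?gnorm.
exists (if s0 then a^-1 else a), B, V^-1; split.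
  apply/orP; right; rewrite eqxx /a /img /=.
  by case: (s0); case: (s); rewrite ?invgM ?invgK !inE eqxx ?orbT.
rewrite (_ : len (_ ^ V^-1) = len R); last by case: ifP; rewrite ?conjVg ?lenV conj_a.
rewrite -(len_img_conj A B (true, s)) eq_p conjgE invgK ?gnorm.
apply: (@leq_trans (len R + (len V + len U)).+1); last by lia.
by rewrite ltnS leq_add2l; apply: lenM_le.
Qed.

Lemma reducible_tie A B l0 l m : l0.1 != l.1 ->
  cancel_len (rev (sval (img A B l0))) (sval (img A B l)) = m ->
  cancel_len (rev (sval (img A B l))) (sval (img A B l0)) = m ->
  size (sval (img A B l)) = (2 * m)%N -> (2 * m <= size (sval (img A B l0)))%N -> 0 < m ->
  reducible A B.
Proof.
wlog gen_l0 : A B l0 l / l0.1 = false => [hwlog|].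
  have [|] := eqVneq l0.1 false; first exact: hwlog.
  case: l0 l => [[] s0] [g s] //= _ gen_l *; apply: reducible_swap.
  by apply: (hwlog B A (false, s0) (~~ g, s)); rewrite ?(img_swap A B) /= ?negbK //; case: g gen_l.
case: l0 gen_l0 => _ s0 /= ->; case: l => [[] s] //= _.
set p := sval (img A B (true, s)); set b := sval (img A B (false, s0)).
move=> cbp cpb sz_p le_b m_gt0.
have red_p : reducedb p by rewrite /p; case: img.
have red_b : reducedb b by rewrite /b; case: img.
apply: (@reducible_of_tie _ _ s0 s (mkFG (take m p)) (mkFG (drop m p))
  (mkFG (take (size b - 2 * m) (drop m b)))).
- by rewrite -mkFG_cat cat_take_drop -/p mkFG_val.
- by rewrite -[LHS]mkFG_val -/b {1}(tie_split cbp cpb) // !mkFG_cat !mkFG_winv mulgA.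
all: rewrite -?(len_img A B (true, s)) -?(len_img A B (false, s0)) !len_mkFG
  ?reducedb_take ?reducedb_drop //.
all: rewrite ?size_takel ?size_drop /len -/p -/b; lia.
Qed.

Lemma homxy_commute A B : (forall l l', commute (img A B l) (img A B l')) ->
  forall g h, commute (homxy A B g) (homxy A B h).
Proof.
move=> img_comm g h; apply: commute_prod => l _; apply/commute_sym.
by apply: commute_prod => l' _; apply: img_comm.
Qed.

Lemma generates_neq1 A B : generates A B -> A != 1 /\ B != 1.
Proof.
have noncomm C D : (forall l l', commute (img C D l) (img C D l')) -> ~ generates C D.
  move=> /homxy_commute comm [g [h [gX hY]]]; have := comm g h.
  by rewrite /commute gX hY; apply/eqP; apply: gxy_neq_gyx.
split; apply/eqP => eq1; apply: (noncomm A B) => //; rewrite eq1 => -[[] []] [[] []];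
  by rewrite /commute /img /= ?invg1 ?mulg1 ?mul1g ?mulgV ?mulVg.
Qed.

Lemma len_eq1 u : len u = 1%N -> exists a, u = img gx gy a.
Proof. by case: u => -[|a []] // ur _; exists a; rewrite img_gxgy; apply: val_inj. Qed.

Lemma img_confined A B l b : (if l.1 then B else A) = img gx gy b ->
  all (fun c : letter => c.1 == b.1) (sval (img A B l)).
Proof. by case: l => g [] /= eqb; rewrite /img /= eqb ?val_invg img_gxgy /= eqxx. Qed.

Lemma not_generates_confined A B (P : pred letter) g0 : generates A B ->
  (forall l, P l -> all (fun c : letter => c.1 == g0) (sval (img A B l))) ->
  ~ (forall ls, reducedb ls -> has (predC P) ls ->
       1 < size (sval (\prod_(l <- ls) img A B l))).
Proof.
move=> /generates_onto onto img_P long.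
have [g] := onto (img gx gy (~~ g0, false)); rewrite img_gxgy => /(congr1 sval).
rewrite val_mkFG // => val_g; have [/(long _ (svalP g))|] := boolP (has (predC P) (sval g)).
  by rewrite val_g.
by rewrite has_predC negbK => /(all_prod_img img_P); rewrite val_g /= andbT; case: (g0).
Qed.

Section Irreducible.
Variables A B : FG.
Hypothesis irredAB : ~ reducible A B.

Let len_transvectionsB B' : B' \in transvections A B -> len B <= len B'.
Proof.
move=> mem; rewrite leqNgt; apply/negP => lt; apply: irredAB.
by exists A, B', 1; rewrite !conjg1 /nielsen_move eqxx mem; split; rewrite ?ltn_add2l.
Qed.

Let len_transvectionsA A' : A' \in transvections B A -> len A <= len A'.
Proof.
move=> mem; rewrite leqNgt; apply/negP => lt; apply: irredAB.
by exists A', B, 1; rewrite !conjg1 /nielsen_move eqxx mem orbT; split; rewrite ?ltn_add2r.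
Qed.

Lemma irreducible_len_img_mul l l' : l.1 != l'.1 ->
  len (img A B l) <= len (img A B l * img A B l') /\
  len (img A B l') <= len (img A B l * img A B l').
Proof.
have lenVM u v : len (u * v) = len (v^-1 * u^-1) by rewrite -invgM lenV.
case: l l' => [[] s] [[] t] //= _; rewrite /img /=; case: s; case: t; split; rewrite ?lenV;
  first [ by apply: len_transvectionsA; rewrite !inE eqxx ?orbT
        | by apply: len_transvectionsB; rewrite !inE eqxx ?orbT
        | by rewrite lenVM ?invgK; apply: len_transvectionsA; rewrite !inE eqxx ?orbT
        | by rewrite lenVM ?invgK; apply: len_transvectionsB; rewrite !inE eqxx ?orbT ].
Qed.

Local Notation imgw l := (sval (img A B l)).

Lemma irreducible_cancel_cross l l' : l.1 != l'.1 ->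
  (2 * cancel_len (rev (imgw l)) (imgw l') <= size (imgw l))%N /\
  (2 * cancel_len (rev (imgw l)) (imgw l') <= size (imgw l'))%N.
Proof.
have := cancel_len_le (rev (imgw l)) (imgw l'); rewrite size_rev.
by move=> ? /irreducible_len_img_mul; rewrite lenM /len; lia.
Qed.

Lemma irreducible_no_tie : (forall l, 0 < size (imgw l)) -> forall l0 l l',
  l != inv_letter l0 -> l' != inv_letter l ->
  (2 * cancel_len (rev (imgw l0)) (imgw l))%N = size (imgw l) ->
  (2 * cancel_len (rev (imgw l)) (imgw l'))%N = size (imgw l) -> False.
Proof.
move=> img_neq_nil l0 l l' l_neq l'_neq c0 c1.
have [eq_g0 | neq_g0] := eqVneq l0.1 l.1.
  rewrite -(letter_eq_same_gen eq_g0 l_neq) in c0.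
  by have := cancel_len_self (svalP (img A B l)) (img_neq_nil l); lia.
have [eq_g1 | neq_g1] := eqVneq l.1 l'.1.
  rewrite (letter_eq_same_gen eq_g1 l'_neq) in c1.
  by have := cancel_len_self (svalP (img A B l)) (img_neq_nil l); lia.
have eq_g : l0.1 = l'.1 by move: neq_g0 neq_g1; case: (l0.1); case: (l.1); case: (l'.1).
have [le_c0 _] := irreducible_cancel_cross neq_g0.
have [eq_l' | neq_l'] := eqVneq l' l0.
  rewrite {}eq_l' in c1; have := img_neq_nil l => ?.
  by apply/irredAB/(reducible_tie neq_g0 erefl); lia.
rewrite (letter_inv_same_gen eq_g neq_l') img_inv_letter val_invg in c1.
set p := imgw l in c0 c1; set b := imgw l0 in le_c0 c0 c1.
set m := cancel_len (rev b) p in c0 le_c0.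
have [le_mb _] := cancel_len_le (rev b) p; rewrite size_rev -/m in le_mb.
have cpb : cancel_len (rev p) (winv b) = m by lia.
have m_gt0 : 0 < m by have := img_neq_nil l; rewrite -/p; lia.
have := prefix_cancel_len cpb (esym c0); rewrite size_winv take_winv.
rewrite (suffix_cancel_len (erefl m) le_mb) -?c0; try lia.
move=> /(_ le_mb)/(congr1 winv); rewrite !winvK => eq_drop.
have : ~~ reducedb (take m p ++ winv (take m p)).
  by apply: not_reducedb_cat_winv; rewrite -size_eq0 size_take -c0; case: ifP; lia.
by rewrite eq_drop cat_take_drop (svalP (img A B l)).
Qed.

Hypothesis genAB : generates A B.

Let len_gt0 u : u != 1 -> (0 < len u)%N.
Proof. by rewrite lt0n; apply: contra => /eqP/len_eq0 ->. Qed.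

Let img_neq_nil l : (0 < size (sval (img A B l)))%N.
Proof.
have [A_neq1 B_neq1] := generates_neq1 genAB.
by have := len_img A B l; rewrite /len => ->; case: (l.1); apply: len_gt0.
Qed.

Lemma irreducible_long_single b : (1 < len A)%N -> B = img gx gy b -> False.
Proof.
move=> lenA eqB.
apply: (not_generates_confined (P := fun l => l.1 == true) (g0 := b.1) genAB).
  by move=> l /eqP gen_l; apply: img_confined; rewrite gen_l.
move=> ls red_ls has_A; apply: (leq_trans lenA).
apply: (size_prod_img_ge (g := true) img_neq_nil irreducible_cancel_cross
  (irreducible_no_tie img_neq_nil)) => // l; rewrite /len in lenA *.
all: rewrite -/(len _) len_img; case: (l.1) => //= _.
by rewrite eqB img_gxgy len_mkFG.
Qed.

Lemma irreducible_not_long : ~ ((1 < len A)%N /\ (1 < len B)%N).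
Proof.
case=> lenA lenB; apply: (not_generates_confined (P := pred0) (g0 := true) genAB) => //.
move=> -[|l ls] //= red_ls _.
apply: (size_prod_img_gt1 img_neq_nil irreducible_cancel_cross
  (irreducible_no_tie img_neq_nil)) => // l'.
by rewrite (_ : size _ = len (img A B l')) // len_img; case: (l'.1).
Qed.

End Irreducible.

Lemma irreducible_generating_letters A B : generates A B -> ~ reducible A B ->
  exists a b, [/\ a.1 != b.1, A = img gx gy a & B = img gx gy b].
Proof.
move=> genAB irr; have [A_neq1 B_neq1] := generates_neq1 genAB.
have len_cases u : u != 1 -> (1 < len u)%N \/ exists a, u = img gx gy a.
  move=> u_neq1; case lenu: (len u) => [|[|n]]; [ | right; exact: len_eq1 | by left].
  by move/len_eq0: lenu u_neq1 => ->; rewrite eqxx.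
have irr_swap : ~ reducible B A by move/reducible_swap.
have [lenA | [a eqA]] := len_cases A A_neq1; have [lenB | [b eqB]] := len_cases B B_neq1.
- by case: (irreducible_not_long irr genAB).
- by case: (irreducible_long_single irr genAB lenA eqB).
- by case: (irreducible_long_single irr_swap (generates_swap genAB) lenB eqA).
have [eq_ab | neq_ab] := eqVneq a.1 b.1; last by exists a, b.
case: (not_generates_confined (P := predT) (g0 := a.1) genAB) => [l _ | ls _ ] //.
  case gl: l.1; last by apply: (img_confined (b := a)); rewrite gl.
  by rewrite eq_ab; apply: (img_confined (b := b)); rewrite gl.
by rewrite has_predC all_predT.
Qed.

Theorem nielsen_invariant (P : FG -> FG -> Prop) :
    (forall A B, P A B -> P B A) ->
    (forall A B, P A B -> P A (A * B)) ->
    (forall A B, P A B -> P A (A^-1 * B)) ->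
    (forall A B w, P A B -> P (A ^ w) (B ^ w)) ->
  P gx gy -> forall A B, generates A B -> P A B.
Proof.
move=> P_swap P_transvect P_transvectV P_conj Pxy.
suff bounded n A B : len A + len B < n -> generates A B -> P A B by move=> A B; apply: bounded.
elim: n A B => [//|n IHn] A B lt_n genAB.
have [[A' [B' [w [mv lt]]]] | irr] := classic (reducible A B).
  have /(generates_conj w) genA'B' := P_nielsen_move generates_swap generates_transvect
    generates_transvectV generates_conj mv genAB.
  have := P_conj _ _ w^-1 (IHn _ _ (leq_trans lt lt_n) genA'B'); rewrite !conjgK.
  exact: (P_nielsen_move P_swap P_transvect P_transvectV P_conj (nielsen_move_sym mv)).
have [a [b [gab -> ->]]] := irreducible_generating_letters genAB irr.
exact: (P_letters P_swap P_transvect P_transvectV P_conj).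
Qed.

(** * Andrews-Curtis equivalence *)

Lemma AC_equiv_refl p : AC_equiv p p.
Proof. exact: rt_refl. Qed.

Lemma AC_equiv_trans p q s : AC_equiv p q -> AC_equiv q s -> AC_equiv p s.
Proof. exact: rt_trans. Qed.

Lemma AC_equiv_mul1 r1 r2 : AC_equiv (r1, r2) (r1 * r2, r2).
Proof. exact/rt_step/AC_mul12. Qed.

Lemma AC_equiv_mul2 r1 r2 : AC_equiv (r1, r2) (r1, r2 * r1).
Proof. exact/rt_step/AC_mul21. Qed.

Lemma AC_equiv_inv1 r1 r2 : AC_equiv (r1, r2) (r1^-1, r2).
Proof. exact/rt_step/AC_inv1. Qed.

Lemma AC_equiv_inv2 r1 r2 : AC_equiv (r1, r2) (r1, r2^-1).
Proof. exact/rt_step/AC_inv2. Qed.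

Lemma AC_equiv_conj1 r1 r2 w : AC_equiv (r1, r2) (r1 ^ w, r2).
Proof. exact/rt_step/AC_conj1. Qed.

Lemma AC_equiv_conj2 r1 r2 w : AC_equiv (r1, r2) (r1, r2 ^ w).
Proof. exact/rt_step/AC_conj2. Qed.

Lemma ACmove_sym p q : ACmove p q -> AC_equiv q p.
Proof.
case=> r1 r2 => [||||w|w].
- apply: AC_equiv_trans (AC_equiv_inv2 _ _) _; apply: AC_equiv_trans (AC_equiv_mul1 _ _) _.
  by rewrite mulgK -{2}[r2]invgK; apply: AC_equiv_inv2.
- apply: AC_equiv_trans (AC_equiv_inv1 _ _) _; apply: AC_equiv_trans (AC_equiv_mul2 _ _) _.
  by rewrite mulgK -{2}[r1]invgK; apply: AC_equiv_inv1.
- by rewrite -{2}[r1]invgK; apply: AC_equiv_inv1.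
- by rewrite -{2}[r2]invgK; apply: AC_equiv_inv2.
- by rewrite -{2}[r1](conjgK w); apply: AC_equiv_conj1.
- by rewrite -{2}[r2](conjgK w); apply: AC_equiv_conj2.
Qed.

Lemma AC_equiv_sym p q : AC_equiv p q -> AC_equiv q p.
Proof.
elim=> [{}p {}q /ACmove_sym | {}p | {}p {}q s _ qp _ sq] //; first exact: AC_equiv_refl.
exact: AC_equiv_trans sq qp.
Qed.

Lemma AC_equiv_morph f p q : {morph f : u v / u * v} ->
  AC_equiv p q -> AC_equiv (f p.1, f p.2) (f q.1, f q.2).
Proof.
move=> fM; elim=> [{}p {}q [] r1 r2 * | {}p | {}p {}q s _ pq _ qs] /=.
- by rewrite fM; apply: AC_equiv_mul1.
- by rewrite fM; apply: AC_equiv_mul2.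
- by rewrite (morphV fM); apply: AC_equiv_inv1.
- by rewrite (morphV fM); apply: AC_equiv_inv2.
- by rewrite -[FGmul _ _]/(r1 ^ _) (morphJ fM); apply: AC_equiv_conj1.
- by rewrite -[FGmul _ _]/(r2 ^ _) (morphJ fM); apply: AC_equiv_conj2.
- exact: AC_equiv_refl.
- exact: AC_equiv_trans pq qs.
Qed.

Lemma AC_equiv_swap p q : AC_equiv p q -> AC_equiv (p.2, p.1) (q.2, q.1).
Proof.
elim=> [{}p {}q [] r1 r2 * | {}p | {}p {}q s _ pq _ qs] /=.
- exact: AC_equiv_mul2.
- exact: AC_equiv_mul1.
- exact: AC_equiv_inv2.
- exact: AC_equiv_inv1.
- exact: AC_equiv_conj2.
- exact: AC_equiv_conj1.
- exact: AC_equiv_refl.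
- exact: AC_equiv_trans pq qs.
Qed.

Inductive nclosure (r : FG) : FG -> Prop :=
| nclosure1 : nclosure r 1
| nclosureM k w : nclosure r k -> nclosure r (k * r ^ w)
| nclosureMV k w : nclosure r k -> nclosure r (k * r^-1 ^ w).

Lemma AC_equiv_nclosure2 r1 r2 k : nclosure r1 k -> AC_equiv (r1, r2) (r1, r2 * k).
Proof.
elim=> [|{}k w _ IHk|{}k w _ IHk]; first by rewrite mulg1; apply: AC_equiv_refl.
all: apply: AC_equiv_trans IHk _; rewrite mulgA.
- apply: AC_equiv_trans (AC_equiv_conj1 _ _ w) _; apply: AC_equiv_trans (AC_equiv_mul2 _ _) _.
  by apply: AC_equiv_trans (AC_equiv_conj1 _ _ w^-1) _; rewrite conjgK; apply: AC_equiv_refl.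
- apply: AC_equiv_trans (AC_equiv_inv1 _ _) _; apply: AC_equiv_trans (AC_equiv_conj1 _ _ w) _.
  apply: AC_equiv_trans (AC_equiv_mul2 _ _) _; apply: AC_equiv_trans (AC_equiv_conj1 _ _ w^-1) _.
  rewrite conjgK; apply: AC_equiv_trans (AC_equiv_inv1 _ _) _.
  by rewrite invgK; apply: AC_equiv_refl.
Qed.

Lemma AC_equiv_nclosure1 r1 r2 k : nclosure r2 k -> AC_equiv (r1, r2) (r1 * k, r2).
Proof. by move/(AC_equiv_nclosure2 r1)/AC_equiv_swap. Qed.

Lemma nclosureMr r k k' : nclosure r k -> nclosure r k' -> nclosure r (k * k').
Proof.
move=> nck; elim=> [|k'' w _ IH|k'' w _ IH]; rewrite ?mulg1 // mulgA.
- exact: nclosureM.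
- exact: nclosureMV.
Qed.

Lemma nclosureJ r k w : nclosure r k -> nclosure r (k ^ w).
Proof.
elim=> [|k' v _ IH|k' v _ IH]; rewrite ?conj1g ?(conjMg k') -?conjgM; first exact: nclosure1.
- exact: nclosureM.
- exact: nclosureMV.
Qed.

Lemma nclosureV r k : nclosure r k -> nclosure r k^-1.
Proof.
elim=> [|k' v _ IH|k' v _ IH]; rewrite ?invg1 ?(invgM k') -?conjVg; first exact: nclosure1.
- by apply: (nclosureMr _ IH); rewrite -[_ ^ v]mul1g; apply/nclosureMV/nclosure1.
- by apply: (nclosureMr _ IH); rewrite invgK -[_ ^ v]mul1g; apply/nclosureM/nclosure1.
Qed.

Lemma nclosure_id r : nclosure r r.
Proof. by have := nclosureM 1 (nclosure1 r); rewrite mul1g conjg1. Qed.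

Definition cong_mod (r u v : FG) : Prop := exists2 k, nclosure r k & v = u * k.

Lemma cong_mod_refl r u : cong_mod r u u.
Proof. by exists 1; [apply: nclosure1 | rewrite mulg1]. Qed.

Lemma cong_mod_sym r u v : cong_mod r u v -> cong_mod r v u.
Proof. by case=> k nck ->; exists k^-1; [apply: nclosureV | rewrite mulgK]. Qed.

Lemma cong_mod_trans r u v w : cong_mod r u v -> cong_mod r v w -> cong_mod r u w.
Proof.
by case=> k nck -> [k' nck' ->]; exists (k * k'); [apply: nclosureMr | rewrite mulgA].
Qed.

Lemma cong_modM r u u' v v' :
  cong_mod r u u' -> cong_mod r v v' -> cong_mod r (u * v) (u' * v').
Proof.
case=> k nck -> [k' nck' ->]; exists (k ^ v * k'); first exact/nclosureMr/nck'/nclosureJ.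
by rewrite conjgE !mulgA mulgK.
Qed.

Lemma cong_modMl r u u' v : cong_mod r u u' -> cong_mod r (u * v) (u' * v).
Proof. by move/cong_modM; apply; apply: cong_mod_refl. Qed.

Lemma cong_modMr r u v v' : cong_mod r v v' -> cong_mod r (u * v) (u * v').
Proof. exact/cong_modM/cong_mod_refl. Qed.

Lemma cong_modV r u u' : cong_mod r u u' -> cong_mod r u^-1 u'^-1.
Proof.
case=> k nck ->; exists (k^-1 ^ u^-1); first exact/nclosureJ/nclosureV.
by rewrite conjgE invgK invgM !mulgA mulVg mul1g.
Qed.

Lemma cong_modX r u u' n : cong_mod r u u' -> cong_mod r (u ^+ n) (u' ^+ n).
Proof.
move=> uu'; elim: n => [|n IHn]; first exact: cong_mod_refl.
by rewrite !expgS; apply: cong_modM.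
Qed.

Lemma cong_mod_nclosure r u k : nclosure r k -> cong_mod r (u * k) u.
Proof. by move=> nck; apply: cong_mod_sym; exists k. Qed.

Lemma AC_equiv_cong_mod2 r1 r2 r2' : cong_mod r1 r2 r2' -> AC_equiv (r1, r2) (r1, r2').
Proof. by case=> k /AC_equiv_nclosure2 ? ->. Qed.

Lemma AC_equiv_cong_mod1 r1 r2 r1' : cong_mod r2 r1 r1' -> AC_equiv (r1, r2) (r1', r2).
Proof. by case=> k /AC_equiv_nclosure1 ? ->. Qed.

Lemma AC_equiv_conj_cong1 r1 r2 r1' w :
  cong_mod r2 (r1 ^ w) r1' -> AC_equiv (r1, r2) (r1', r2).
Proof. by move=> /AC_equiv_cong_mod1; apply: AC_equiv_trans (AC_equiv_conj1 _ _ w). Qed.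

(** * Automorphisms preserving AK(n) up to AC-equivalence *)

Lemma AK2E n : AK2 n = gx ^+ n * (gy ^+ n.+1)^-1.
Proof. by rewrite /AK2 !FGpowE. Qed.

Lemma homxy_AK2 A B n : homxy A B (AK2 n) = A ^+ n * (B ^+ n.+1)^-1.
Proof. by rewrite AK2E homxyM (morphV (@homxyM _ _)) !(morphX (@homxyM _ _)) homxy_gx homxy_gy. Qed.

Lemma homxy_AK1 A B : homxy A B AK1 = A * (B * (A * (B^-1 * (A^-1 * B^-1)))).
Proof. by rewrite /AK1 !homxyM !(morphV (@homxyM _ _)) homxy_gx homxy_gy. Qed.

Definition AK_invariant (n : nat) (A B : FG) : Prop :=
  AC_equiv (homxy A B AK1, homxy A B (AK2 n)) (AK1, AK2 n).

Lemma AK_invariant_homxy n A B C D : AK_invariant n A B -> AK_invariant n C D ->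
  AK_invariant n (homxy A B C) (homxy A B D).
Proof.
move=> invAB /(AC_equiv_morph (@homxyM A B)) /= invCD.
by rewrite /AK_invariant -!homxy_comp; apply: AC_equiv_trans invCD invAB.
Qed.

Lemma AK_invariant_inverse n A B C D : AK_invariant n C D ->
  homxy A B C = gx -> homxy A B D = gy -> AK_invariant n A B.
Proof.
move=> /(AC_equiv_morph (@homxyM A B)) /= invCD eqC eqD; apply: AC_equiv_sym.
by move: invCD; rewrite !homxy_comp eqC eqD !homxy_id.
Qed.

Lemma AK_invariant_conj n A B w : AK_invariant n A B -> AK_invariant n (A ^ w) (B ^ w).
Proof.
move=> invAB; rewrite /AK_invariant !homxy_conj; apply: AC_equiv_trans _ invAB.
apply: AC_equiv_trans (AC_equiv_conj1 _ _ w^-1) _; rewrite conjgK.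
by apply: AC_equiv_trans (AC_equiv_conj2 _ _ w^-1) _; rewrite conjgK; apply: AC_equiv_refl.
Qed.

Lemma AK_invariant_yx n : AK_invariant n gy gx.
Proof.
apply: AC_equiv_sym; rewrite /AK_invariant homxy_AK2 AK2E.
have -> : homxy gy gx AK1 = AK1^-1 by rewrite homxy_AK1; fg_compute.
(* Conjugation by xyx exchanges x and y modulo AK1. *)
have conj_x : cong_mod AK1 (gx ^ (gx * gy * gx)^-1) gy.
  rewrite (_ : gx ^ _ = gy * AK1 ^ gy); last by fg_compute.
  exact/cong_mod_nclosure/nclosureJ/nclosure_id.
have conj_y : cong_mod AK1 (gy ^ (gx * gy * gx)^-1) gx.
  rewrite (_ : gy ^ _ = gx * AK1^-1); last by fg_compute.
  exact/cong_mod_nclosure/nclosureV/nclosure_id.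
apply: AC_equiv_trans (AC_equiv_conj2 _ _ (gx * gy * gx)^-1) _.
apply: AC_equiv_trans (AC_equiv_cong_mod2 _) (AC_equiv_inv1 _ _).
by rewrite conjMg conjVg !conjXg; apply: cong_modM; [|apply: cong_modV]; apply: cong_modX.
Qed.

Section TransvectionIdentities.
Variables (G : groupType) (x y X : G).
Local Notation t := (x * y).
Local Notation P := ((x * X) ^ t^-1).
Local Notation c1 := (t^-1 * t^-1 * P^-1 * (x * X) * t * x).
Local Notation c3 := (t^-1 * x^-1 * t^-1 * x * t * x).

Lemma transvection_conj_c1 : commute x X ->
  c1 ^ (t^-1 * X^-1 * t) =
  t^-1 * x^-1 * t^-1 * x * X * t * X^-1 * (X * P^-1)^-1 ^ t.
Proof.
move=> xX; rewrite /conjg ?(invgM, invgK, mulgA) ?(mulgK, mulgVK, mulgV, mulVg, mul1g, mulg1).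
by rewrite -[_ / X * x * X](mulgA _ x) xX -!mulgA mulKg.
Qed.

Lemma transvection_c3_P : t^-1 * x^-1 * t^-1 * x * P * t * X^-1 = c3.
Proof. by rewrite /conjg ?(invgM, invgK, mulgA) ?(mulgK, mulgVK, mulgV, mulVg, mul1g, mulg1). Qed.

End TransvectionIdentities.

(* With t = xy, modulo AK1 the relator x^n y^-(n+1) becomes BB, under which x^n and P are
   congruent; this allows trading AK1 for its image Ast under y |-> t through the
   conjugates c1 and c3, and finally to trade BB for the image of x^n y^-(n+1). *)
Section Transvection.
Variable n : nat.
Local Notation t := (gx * gy).
Local Notation X := (gx ^+ n).
Local Notation P := ((gx * X) ^ t^-1).
Local Notation BB := (X * P^-1).
Local Notation c1 := (t^-1 * t^-1 * P^-1 * (gx * X) * t * gx).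
Local Notation c3 := (t^-1 * gx^-1 * t^-1 * gx * t * gx).
Local Notation Ast := (gx * (t * (gx * (t^-1 * (gx^-1 * t^-1))))).

Let commute_x_X : commute gx X.
Proof. exact/commuteX/commute_refl. Qed.

Let cong_BB : cong_mod BB X P.
Proof.
by exists ((BB^-1) ^ X); [apply/nclosureJ/nclosureV/nclosure_id | rewrite [_ ^ X]conjgE ?gnorm].
Qed.

Lemma AK_cong_BB : AC_equiv (AK1, AK2 n) (AK1, BB).
Proof.
apply/AC_equiv_cong_mod2; rewrite AK2E -expgS conjXg; apply/cong_modMr/cong_modV/cong_modX.
rewrite (_ : gx ^ _ = gy * AK1 ^ gy); last by fg_compute.
exact/cong_mod_sym/cong_mod_nclosure/nclosureJ/nclosure_id.
Qed.

Lemma AK1_to_Ast : AC_equiv (AK1, BB) (Ast, BB).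
Proof.
apply: AC_equiv_trans (_ : AC_equiv _ (c1, BB)) _.
  apply: (@AC_equiv_conj_cong1 _ _ _ (t * gx)).
  rewrite (_ : AK1 ^ _ = t^-1 * t^-1 * X^-1 * (gx * X) * t * gx); last first.
    by rewrite commute_x_X [_ * (X * gx)]mulgA mulgVK; fg_compute.
  by do 3 apply: cong_modMl; apply/cong_modMr/cong_modV/cong_BB.
apply: AC_equiv_trans (_ : AC_equiv _ (c3, BB)) _.
  apply: (@AC_equiv_conj_cong1 _ _ _ (t^-1 * X^-1 * t)).
  rewrite transvection_conj_c1 // -(transvection_c3_P gx gy X).
  apply: cong_mod_trans (cong_mod_nclosure _ (nclosureJ _ (nclosureV (nclosure_id _)))) _.
  by do 2 apply: cong_modMl; apply/cong_modMr/cong_BB.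
apply: (@AC_equiv_conj_cong1 _ _ _ (t^-1 * gx^-1 * t^-1)).
by rewrite (_ : c3 ^ _ = Ast); [apply: cong_mod_refl | fg_compute].
Qed.

Lemma BB_to_AK2_image : AC_equiv (Ast, BB) (Ast, X * (t ^+ n.+1)^-1).
Proof.
apply: AC_equiv_trans (AC_equiv_conj2 _ _ gx^-1) (AC_equiv_cong_mod2 _).
rewrite conjMg conjVg -conjgM -invgM.
rewrite (_ : X ^ _ = X); last by rewrite conjgE invgK mulgA commute_x_X mulgK.
apply/cong_modMr/cong_modV; rewrite -expgS conjXg; apply: cong_modX.
by rewrite (_ : gx ^ _ = t * Ast ^ t); [apply/cong_mod_nclosure/nclosureJ/nclosure_id | fg_compute].
Qed.

End Transvection.

Lemma AK_invariant_x_xy n : AK_invariant n gx (gx * gy).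
Proof.
apply: AC_equiv_sym; rewrite /AK_invariant homxy_AK1 homxy_AK2.
apply: AC_equiv_trans (AK_cong_BB n) _; apply: AC_equiv_trans (AK1_to_Ast n) _.
exact: BB_to_AK2_image.
Qed.

Lemma AK_invariant_x_Vxy n : AK_invariant n gx (gx^-1 * gy).
Proof.
apply: (AK_invariant_inverse (AK_invariant_x_xy n)); rewrite ?homxyM homxy_gx //.
by rewrite homxy_gy mulVKg.
Qed.

Theorem proposition7 (n : nat) (phi : FG -> FG) :
  2 < n -> is_aut phi ->
  AC_equiv (phi AK1, phi (AK2 n)) (AK1, AK2 n).
Proof.
move=> _ [phiM [psi _ psiK]]; rewrite (morphE phiM AK1) (morphE phiM (AK2 n)).
apply: (nielsen_invariant (P := AK_invariant n)) => [A B inv | A B inv | A B inv | A B w | |].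
- by have := AK_invariant_homxy inv (AK_invariant_yx n); rewrite homxy_gx homxy_gy.
- have := AK_invariant_homxy inv (AK_invariant_x_xy n).
  by rewrite homxyM homxy_gx homxy_gy.
- have := AK_invariant_homxy inv (AK_invariant_x_Vxy n).
  by rewrite homxyM (morphV (@homxyM A B)) homxy_gx homxy_gy.
- exact: AK_invariant_conj.
- by rewrite /AK_invariant !homxy_id; apply: AC_equiv_refl.
by exists (psi gx), (psi gy); rewrite -!(morphE phiM) !psiK.
Qed.
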